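(* Let $G$ be a Hausdorff topological group. (a) If $G$ is STAP then $G$ is HTAP, and if $G$ is HTAP then $G$ is TAP. (a-bis) If $G$ is abelian, then $G$ is HTAP if and only if $G$ is TAP. (b) Let $(D_i)_{i\in\mathbb N}$ be nontrivial discrete groups and $H=\{g\in\prod_i D_i:\{i:g(i)\ne e_{D_i}\}\text{ finite}\}$ with the topology induced from the product topology. Then $H$ is HTAP but not STAP. In particular, taking the $D_i$ finite abelian, there is a countable metrizable precompact abelian group which is TAP but not STAP.
   Context: $\prod_{k=1}^n a_k=a_1\cdots a_n$; $e$ is the neutral element. A sequence $(g_n)$ in $G$ is hyper-multipliable if for every integer sequence $(m_n)$ the sequence $\left(\prod_{k=1}^n g_k^{m_k}\right)_n$ converges in $G$; hyper-converging if $g_n^{m_n}\to e$ for every integer sequence $(m_n)$. A subset $A\subset G$ is absolutely productive if every sequence of pairwise distinct elements of $A$ is hyper-multipliable. $G$ is TAP if every absolutely productive subset of $G$ is finite; HTAP if no sequence of pairwise distinct elements of $G$ is hyper-multipliable; STAP if no sequence of pairwise distinct elements of $G$ is hyper-converging. *)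

From Stdlib Require Import Reals ZArith List Classical.

Set Implicit Arguments.

Record GTData := {
  gcar :> Type;
  gmul : gcar -> gcar -> gcar;
  ginv : gcar -> gcar;
  gone : gcar;
  gopen : (gcar -> Prop) -> Prop
}.

Section Props.
Variable G : GTData.
Local Notation "x * y" := (gmul G x y).

Definition group_axioms : Prop :=
  (forall x y z : G, x * (y * z) = (x * y) * z) /\
  (forall x : G, gone G * x = x) /\ (forall x : G, x * gone G = x) /\
  (forall x : G, ginv G x * x = gone G) /\ (forall x : G, x * ginv G x = gone G).

Definition topology_axioms : Prop :=
  gopen G (fun _ => True) /\
  (forall (I : Type) (F : I -> G -> Prop), (forall i, gopen G (F i)) ->
       gopen G (fun x => exists i, F i x)) /\
  (forall U V, gopen G U -> gopen G V -> gopen G (fun x => U x /\ V x)).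

Definition continuous_ops : Prop :=
  (forall (x y : G) (U : G -> Prop), gopen G U -> U (x * y) ->
     exists V W : G -> Prop, gopen G V /\ gopen G W /\ V x /\ W y /\
       (forall a b, V a -> W b -> U (a * b))) /\
  (forall (x : G) (U : G -> Prop), gopen G U -> U (ginv G x) ->
     exists V : G -> Prop, gopen G V /\ V x /\ (forall a, V a -> U (ginv G a))).

Definition hausdorff : Prop :=
  forall x y : G, x <> y -> exists U V : G -> Prop,
    gopen G U /\ gopen G V /\ U x /\ V y /\ (forall z, U z -> V z -> False).

Definition hausdorff_topological_group : Prop :=
  group_axioms /\ topology_axioms /\ continuous_ops /\ hausdorff.

Definition abelian : Prop := forall x y : G, x * y = y * x.

Definition converges_to (a : nat -> G) (x : G) : Prop :=
  forall U, gopen G U -> U x -> exists N, forall n, (N <= n)%nat -> U (a n).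

Definition convergent (a : nat -> G) : Prop := exists x, converges_to a x.

Fixpoint npow (g : G) (n : nat) : G :=
  match n with O => gone G | S k => g * npow g k end.

Definition zpow (g : G) (m : Z) : G :=
  match m with
  | Z0 => gone G
  | Zpos p => npow g (Pos.to_nat p)
  | Zneg p => ginv G (npow g (Pos.to_nat p))
  end.

(* partial products  f 0 * f 1 * ... * f n  (indexing from 0 instead of 1) *)
Fixpoint pprod (f : nat -> G) (n : nat) : G :=
  match n with O => f O | S k => pprod f k * f (S k) end.

Definition hyper_multipliable (g : nat -> G) : Prop :=
  forall m : nat -> Z, convergent (pprod (fun k => zpow (g k) (m k))).

Definition hyper_converging (g : nat -> G) : Prop :=
  forall m : nat -> Z, converges_to (fun n => zpow (g n) (m n)) (gone G).

Definition pairwise_distinct (g : nat -> G) : Prop :=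
  forall i j, i <> j -> g i <> g j.

Definition absolutely_productive (A : G -> Prop) : Prop :=
  forall g : nat -> G, pairwise_distinct g -> (forall n, A (g n)) ->
    hyper_multipliable g.

Definition finite_set (A : G -> Prop) : Prop :=
  exists l : list G, forall x, A x -> In x l.

Definition TAP : Prop :=
  forall A, absolutely_productive A -> finite_set A.

Definition HTAP : Prop :=
  forall g : nat -> G, pairwise_distinct g -> ~ hyper_multipliable g.

Definition STAP : Prop :=
  forall g : nat -> G, pairwise_distinct g -> ~ hyper_converging g.

Definition countable : Prop := exists f : G -> nat, forall x y, f x = f y -> x = y.

Definition metrizable : Prop :=
  exists d : G -> G -> R,
    (forall x y, (0 <= d x y)%R) /\ (forall x y, d x y = 0%R <-> x = y) /\
    (forall x y, d x y = d y x) /\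
    (forall x y z, (d x z <= d x y + d y z)%R) /\
    (forall U, gopen G U <->
       (forall x, U x -> exists eps, (0 < eps)%R /\
          forall y, (d x y < eps)%R -> U y)).

Definition precompact : Prop :=
  forall U, gopen G U -> U (gone G) ->
    exists l : list G, forall x, exists g, In g l /\ U (ginv G g * x).

End Props.

Record Group := {
  dcar :> Type;
  dmul : dcar -> dcar -> dcar;
  dinv : dcar -> dcar;
  done : dcar;
  dassoc : forall x y z, dmul x (dmul y z) = dmul (dmul x y) z;
  dmul1l : forall x, dmul done x = x;
  dmul1r : forall x, dmul x done = x;
  dmulVl : forall x, dmul (dinv x) x = done;
  dmulVr : forall x, dmul x (dinv x) = done
}.

Definition nontrivial (D : Group) : Prop := exists x : D, x <> done D.

Lemma dinv1 (D : Group) : dinv D (done D) = done D.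
Proof. rewrite <- (dmul1r D (dinv D (done D))). apply dmulVl. Qed.

Section RestrictedProduct.
Variable D : nat -> Group.

Definition fin_supp (g : forall i, D i) : Prop :=
  exists l : list nat, forall i, g i <> done (D i) -> In i l.

Definition Hcar := { g : forall i, D i | fin_supp g }.

Lemma fin_supp_mul (g h : forall i, D i) : fin_supp g -> fin_supp h ->
  fin_supp (fun i => dmul (D i) (g i) (h i)).
Proof.
  intros [l1 H1] [l2 H2]. exists (l1 ++ l2). intros i Hi. apply in_or_app.
  destruct (classic (g i = done (D i))) as [E1|E1]; [|left; auto].
  destruct (classic (h i = done (D i))) as [E2|E2]; [|right; auto].
  exfalso; apply Hi; rewrite E1, E2; apply dmul1l.
Qed.

Lemma fin_supp_inv (g : forall i, D i) : fin_supp g ->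
  fin_supp (fun i => dinv (D i) (g i)).
Proof.
  intros [l H1]. exists l. intros i Hi. apply H1. intro E; apply Hi.
  rewrite E; apply dinv1.
Qed.

Lemma fin_supp_one : fin_supp (fun i => done (D i)).
Proof. exists nil. intros i Hi; now destruct Hi. Qed.

(* topology induced on H by the product of the discrete topologies:
   U is open iff each x in U has a basic product neighbourhood
   {y | y i = x i for i in F}, F finite, whose trace on H lies in U. *)
Definition Hopen (U : Hcar -> Prop) : Prop :=
  forall x, U x -> exists F : list nat,
    forall y : Hcar, (forall i, In i F -> proj1_sig y i = proj1_sig x i) -> U y.

Definition restricted_product : GTData := {|
  gcar := Hcar;
  gmul := fun g h => exist _ _ (fin_supp_mul (proj2_sig g) (proj2_sig h));
  ginv := fun g => exist _ _ (fin_supp_inv (proj2_sig g));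
  gone := exist _ _ fin_supp_one;
  gopen := Hopen
|}.

End RestrictedProduct.

(* Proof plan.
   (a) The terms of a convergent series tend to e (convergent sequences are
       Cauchy), so hyper-multipliable implies hyper-converging: STAP => HTAP.
       An infinite absolutely productive set contains a sequence of distinct
       elements, which is then hyper-multipliable: HTAP => TAP.
   (a-bis) If all subseries of a series converge, the partial products of the
       subseries supported far out are uniformly small (otherwise disjoint bad
       blocks glue into a non-Cauchy subseries).  In an abelian group this makes
       every injective rearrangement of the series convergent; hence the range of
       a hyper-multipliable sequence is absolutely productive, so TAP => HTAP.
   (b) We axiomatise "discrete coordinates" (finitely supported homomorphisms into
       discrete groups determining the topology).  Such a group is HTAP: from a
       hyper-multipliable distinct sequence one extracts terms with private
       coordinates, and the product of exactly those terms would have infinite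
       support.  Elements supported on one coordinate each witness ~ STAP.
   The restricted product has discrete coordinates; so has nat with bitwise xor,
   a countable, metrizable, precompact abelian model of (Z/2)^(N) giving the
   final example. *)
From Stdlib Require Import Reals ZArith List.
From Stdlib Require Import Arith Lia Lra Wf_nat Permutation Classical ClassicalEpsilon
  FunctionalExtensionality ProofIrrelevance.

Lemma choose_sequence {X : Type} (P : list X -> X -> Prop) :
  (forall L, exists x, P L x) -> exists g : nat -> X, forall k, P (map g (seq 0 k)) (g k).
Proof.
  intros H. destruct (choice P H) as [f Hf].
  pose (hist := fix hist k := match k with O => nil | S k => hist k ++ f (hist k) :: nil end).
  exists (fun k => f (hist k)).
  assert (Hh : forall k, hist k = map (fun k => f (hist k)) (seq 0 k)).
  { induction k as [|k IH]; [reflexivity|]. rewrite seq_S, map_app. simpl. now rewrite <- IH. }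
  intro k. rewrite <- Hh. apply Hf.
Qed.

Lemma injective_seq_not_in_list {X : Type} (g : nat -> X) (l : list X) :
  (forall i j, i <> j -> g i <> g j) -> ~ (forall n, In (g n) l).
Proof.
  intros Hd Hin.
  assert (ND : NoDup (map g (seq 0 (S (length l))))).
  { apply FinFun.Injective_map_NoDup; [|apply seq_NoDup].
    intros a b E. destruct (Nat.eq_dec a b); [assumption|]. exfalso; eapply Hd; eauto. }
  assert (Hle := NoDup_incl_length ND (l' := l)).
  rewrite length_map, length_seq in Hle.
  enough (S (length l) <= length l) by lia.
  apply Hle. intros x Hx. apply in_map_iff in Hx. destruct Hx as [n [<- _]]. apply Hin.
Qed.

Lemma infinite_distinct_seq {X : Type} (A : X -> Prop) :
  ~ (exists l : list X, forall x, A x -> In x l) ->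
  exists g : nat -> X, (forall i j, i <> j -> g i <> g j) /\ forall n, A (g n).
Proof.
  intro Hinf.
  assert (Hnew : forall L : list X, exists x, A x /\ ~ In x L).
  { intro L. apply NNPP; intro C. apply Hinf. exists L. intros x Ax.
    apply NNPP; intro Hx. apply C. eauto. }
  destruct (choose_sequence _ Hnew) as [g Hg]. exists g. split; [|apply Hg].
  assert (Hlt : forall a b, a < b -> g a <> g b).
  { intros a b Hab E. apply (proj2 (Hg b)). rewrite <- E.
    apply in_map. apply in_seq. lia. }
  intros i j Hij E. destruct (Nat.lt_total i j) as [h|[h|h]].
  - exact (Hlt i j h E).
  - contradiction.
  - exact (Hlt j i h (eq_sym E)).
Qed.

Lemma injective_left_inverse (s : nat -> nat) :
  (forall a b, s a = s b -> a = b) -> exists r : nat -> nat, forall k, r (s k) = k.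
Proof.
  intro Hs. exists (fun n => epsilon (inhabits 0) (fun k => s k = n)).
  intro k. apply Hs. apply (epsilon_spec (inhabits 0) (fun k' => s k' = s k)). eauto.
Qed.

Lemma injective_escapes (s : nat -> nat) : (forall a b, s a = s b -> a = b) ->
  forall N, exists K0, forall k, K0 <= k -> N <= s k.
Proof.
  intros Hs N. induction N as [|N [K0 HK]]; [exists 0; intros; lia|].
  destruct (classic (exists k, s k = N)) as [[kN HkN]|Hno].
  - exists (max K0 (S kN)). intros k Hk. specialize (HK k ltac:(lia)).
    destruct (Nat.eq_dec (s k) N) as [e|e]; [|lia].
    rewrite <- HkN in e. apply Hs in e. lia.
  - exists K0. intros k Hk. specialize (HK k Hk).
    destruct (Nat.eq_dec (s k) N); [exfalso; eauto|lia].
Qed.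

Definition truth (P : Prop) : bool := if excluded_middle_informative P then true else false.

Lemma truthP (P : Prop) : reflect P (truth P).
Proof. unfold truth. destruct (excluded_middle_informative P); now constructor. Qed.

Lemma list_max_in (F : list nat) i : In i F -> i <= list_max F.
Proof.
  intro Hi. assert (H := proj1 (list_max_le F (list_max F)) (le_n _)).
  rewrite Forall_forall in H. auto.
Qed.

(* Consecutive blocks: block j starts at [block_start bb j] and a block starting
   at N ends at [bb N]; the next block starts right after. *)
Fixpoint block_start (bb : nat -> nat) (j : nat) : nat :=
  match j with O => O | S j => S (bb (block_start bb j)) end.

Section Blocks.
Variable bb : nat -> nat.
Hypothesis bb_ge : forall N, N <= bb N.

Lemma block_start_ge j : j <= block_start bb j.
Proof. induction j as [|j IH]; simpl; [lia|]. specialize (bb_ge (block_start bb j)). lia. Qed.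

Lemma block_end_lt_start l k : l < k -> bb (block_start bb l) < block_start bb k.
Proof.
  induction k as [|k IH]; intro Hlk; [lia|]. simpl.
  destruct (Nat.eq_dec l k) as [->|Hne]; [lia|].
  specialize (IH ltac:(lia)). specialize (bb_ge (block_start bb k)). lia.
Qed.

Variable TT : nat -> nat -> bool.
Hypothesis TT_supp : forall N n, TT N n = true -> N <= n.

Definition glued_blocks (n : nat) : bool :=
  truth (exists j, TT (block_start bb j) n = true /\ n <= bb (block_start bb j)).

Lemma glued_blocks_window M n : n <= bb (block_start bb (S M)) ->
  andb (glued_blocks n) (bb (block_start bb M) <? n) = TT (block_start bb (S M)) n.
Proof.
  intro Hn. unfold glued_blocks.
  destruct (TT (block_start bb (S M)) n) eqn:E.
  - specialize (TT_supp _ _ E). simpl in TT_supp.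
    destruct (truthP (exists j, TT (block_start bb j) n = true /\ n <= bb (block_start bb j)))
      as [_|C]; [apply Nat.ltb_lt; lia|].
    exfalso. apply C. exists (S M). auto.
  - destruct (truthP (exists j, TT (block_start bb j) n = true /\ n <= bb (block_start bb j)))
      as [[l [El Hl]]|_]; [|reflexivity].
    simpl. apply Nat.ltb_ge. destruct (Nat.lt_total l (S M)) as [h|[h|h]].
    + destruct (Nat.eq_dec l M) as [->|Hne]; [exact Hl|].
      pose proof (block_end_lt_start l M ltac:(lia)).
      pose proof (bb_ge (block_start bb M)). lia.
    + subst l. congruence.
    + pose proof (block_end_lt_start (S M) l h). specialize (TT_supp _ _ El). lia.
Qed.
End Blocks.

Section TopologicalGroup.
Variable G : GTData.
Hypothesis GA : group_axioms G.
Hypothesis CO : continuous_ops G.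

Lemma convergent_cauchy (Q : nat -> G) : convergent G Q ->
  forall U, gopen G U -> U (gone G) ->
  exists M, forall a b, M <= a -> M <= b -> U (gmul G (ginv G (Q a)) (Q b)).
Proof.
  destruct GA as (_ & _ & _ & Vl & _). destruct CO as [Cm Ci].
  intros [x Hx] U HU Ue.
  assert (Ux : U (gmul G (ginv G x) x)) by now rewrite Vl.
  destruct (Cm _ _ _ HU Ux) as (V & W & HV & HW & Vx & Wx & HVW).
  destruct (Ci x V HV Vx) as (V' & HV' & V'x & HV'V).
  destruct (Hx V' HV' V'x) as [N1 HN1]. destruct (Hx W HW Wx) as [N2 HN2].
  exists (N1 + N2). intros a b Ha Hb. apply HVW; [apply HV'V, HN1|apply HN2]; lia.
Qed.

(* The terms of a convergent series tend to e; in particular a hyper-multipliable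
   sequence is hyper-converging. *)
Lemma hyper_multipliable_converging (g : nat -> G) :
  hyper_multipliable G g -> hyper_converging G g.
Proof.
  destruct GA as (As & M1l & _ & Vl & _).
  intros Hm m U HU Ue. destruct (convergent_cauchy _ (Hm m) U HU Ue) as [M HM].
  exists (S M). intros [|k] Hk; [lia|].
  specialize (HM k (S k) ltac:(lia) ltac:(lia)). simpl pprod in HM.
  rewrite As, Vl, M1l in HM. exact HM.
Qed.

Definition sel (T : nat -> bool) (y : nat -> G) (n : nat) : G :=
  if T n then y n else gone G.

Lemma pprod_ext (f f' : nat -> G) b :
  (forall n, n <= b -> f n = f' n) -> pprod G f b = pprod G f' b.
Proof. induction b; intro H; simpl; rewrite H by lia; try rewrite IHb; auto. Qed.

Lemma pprod_sel_none (T : nat -> bool) y b :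
  (forall n, n <= b -> T n = false) -> pprod G (sel T y) b = gone G.
Proof.
  destruct GA as (_ & M1l & _).
  induction b as [|b IH]; intro H; simpl pprod.
  - unfold sel. now rewrite H.
  - rewrite IH by (intros; apply H; lia). unfold sel. rewrite H by lia. apply M1l.
Qed.

Lemma pprod_sel_split (T : nat -> bool) y a b : a < b ->
  pprod G (sel T y) b =
  gmul G (pprod G (sel T y) a) (pprod G (sel (fun n => andb (T n) (a <? n)) y) b).
Proof.
  destruct GA as (As & M1l & _).
  induction b as [|b IH]; intro Hab; [lia|]. simpl pprod.
  assert (E : sel (fun n => andb (T n) (a <? n)) y (S b) = sel T y (S b)).
  { unfold sel. replace (a <? S b) with true by (symmetry; apply Nat.ltb_lt; lia).
    now rewrite Bool.andb_true_r. }
  rewrite E. destruct (Nat.eq_dec a b) as [<-|Hne].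
  - rewrite (pprod_sel_none (fun n => andb (T n) (a <? n))), M1l; [reflexivity|].
    intros n Hn. replace (a <? n) with false by (symmetry; apply Nat.ltb_ge; lia).
    apply Bool.andb_false_r.
  - now rewrite IH, As by lia.
Qed.

(* If all subseries of y converge, then subseries supported far out have all
   their partial products uniformly close to e.  Otherwise one finds disjoint
   consecutive "bad" blocks, and the subseries made of all of them is not Cauchy. *)
Lemma subseries_uniformly_small (y : nat -> G) :
  (forall T, convergent G (pprod G (sel T y))) ->
  forall U, gopen G U -> U (gone G) ->
  exists N, forall T, (forall n, T n = true -> N <= n) ->
    forall b, U (pprod G (sel T y) b).
Proof.
  destruct GA as (As & M1l & _ & Vl & _).
  intros Hsub U HU Ue. apply NNPP; intro Hno.
  assert (Hbad : forall N, exists Tb : (nat -> bool) * nat,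
    (forall n, fst Tb n = true -> N <= n) /\ ~ U (pprod G (sel (fst Tb) y) (snd Tb))).
  { intro N. apply NNPP; intro C. apply Hno. exists N. intros T HT b.
    apply NNPP; intro C'. apply C. exists (T, b). auto. }
  destruct (choice _ Hbad) as [blk Hblk].
  pose (TT := fun N => fst (blk N)). pose (bb := fun N => snd (blk N)).
  assert (TT_supp : forall N n, TT N n = true -> N <= n) by (intro N; apply (Hblk N)).
  assert (bb_ge : forall N, N <= bb N).
  { intro N. destruct (le_lt_dec N (bb N)) as [h|h]; [exact h|].
    exfalso. apply (proj2 (Hblk N)). rewrite pprod_sel_none; [exact Ue|].
    intros n Hn. destruct (fst (blk N) n) eqn:E; [|reflexivity].
    apply TT_supp in E. unfold bb in h. lia. }
  pose (start := block_start bb).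
  destruct (convergent_cauchy _ (Hsub (glued_blocks bb TT)) U HU Ue) as [M HM].
  pose (a := bb (start M)). pose (b := bb (start (S M))).
  assert (Ha : M <= a).
  { pose proof (block_start_ge bb bb_ge M). pose proof (bb_ge (start M)).
    unfold a, start in *. lia. }
  assert (Hab : a < b).
  { unfold a, b. change (start (S M)) with (S (bb (start M))).
    pose proof (bb_ge (S (bb (start M)))). lia. }
  specialize (HM a b Ha ltac:(lia)).
  rewrite (pprod_sel_split _ y a b Hab), As, Vl, M1l in HM.
  apply (proj2 (Hblk (start (S M)))). fold (TT (start (S M))) (bb (start (S M))).
  erewrite pprod_ext; [exact HM|]. intros n Hn. unfold sel.
  assert (W := glued_blocks_window bb bb_ge TT TT_supp M n Hn). fold start a in W.
  now rewrite W.
Qed.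

Definition prodL (f : nat -> G) (l : list nat) : G :=
  fold_right (fun n acc => gmul G (f n) acc) (gone G) l.

Lemma prodL_app f l1 l2 : prodL f (l1 ++ l2) = gmul G (prodL f l1) (prodL f l2).
Proof.
  destruct GA as (As & M1l & _).
  induction l1 as [|n l1 IH]; simpl; [now rewrite M1l|]. now rewrite IH, As.
Qed.

Lemma pprod_prodL f M : pprod G f M = prodL f (seq 0 (S M)).
Proof.
  destruct GA as (_ & _ & M1r & _).
  induction M as [|M IH]; [simpl; now rewrite M1r|].
  rewrite seq_S, prodL_app, <- IH. simpl. now rewrite M1r.
Qed.

Lemma prodL_map f s l : prodL f (map s l) = prodL (fun k => f (s k)) l.
Proof. induction l as [|n l IH]; simpl; [reflexivity|]. now rewrite IH. Qed.

Lemma prodL_sel_filter (a : nat -> bool) y l : prodL (sel a y) l = prodL y (filter a l).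
Proof.
  destruct GA as (_ & M1l & _).
  induction l as [|n l IH]; simpl; [reflexivity|]. unfold sel at 1.
  destruct (a n); simpl; rewrite IH; auto.
Qed.

Lemma sel_sel (a b : nat -> bool) y : sel a (sel b y) = sel (fun n => andb (b n) (a n)) y.
Proof.
  apply functional_extensionality. intro n. unfold sel.
  destruct (a n), (b n); reflexivity.
Qed.

Section Abelian.
Hypothesis Ab : abelian G.

Lemma prodL_perm f l l' : Permutation l l' -> prodL f l = prodL f l'.
Proof.
  destruct GA as (As & _).
  induction 1; simpl; auto.
  - now rewrite IHPermutation.
  - now rewrite !As, (Ab (f y)).
  - congruence.
Qed.

Lemma prodL_sel_split (a : nat -> bool) y l :
  prodL y l = gmul G (prodL (sel a y) l) (prodL (sel (fun n => negb (a n)) y) l).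
Proof.
  destruct GA as (As & M1l & _).
  induction l as [|n l IH]; simpl; [now rewrite M1l|].
  rewrite IH. unfold sel. destruct (a n); simpl.
  - now rewrite M1l, As.
  - rewrite !M1l, !As. now rewrite (Ab _ (y n)).
Qed.

Lemma pprod_extract (T : nat -> bool) (y : nat -> G) (s : nat -> nat) K M :
  (forall a b, s a = s b -> a = b) ->
  (forall k, k <= K -> T (s k) = true /\ s k <= M) ->
  pprod G (sel T y) M =
  gmul G (pprod G (fun k => y (s k)) K)
    (pprod G (sel (fun n => andb (T n) (negb (truth (In n (map s (seq 0 (S K))))))) y) M).
Proof.
  intros sinj HK. set (L := map s (seq 0 (S K))).
  assert (HL : forall n, In n L -> T n = true /\ n <= M).
  { intros n Hn. apply in_map_iff in Hn. destruct Hn as [k [<- Hk]].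
    apply in_seq in Hk. apply HK. lia. }
  rewrite !pprod_prodL, (prodL_sel_split (fun n => truth (In n L))), !sel_sel. f_equal.
  rewrite prodL_sel_filter.
  assert (Pm : Permutation (filter (fun n => andb (T n) (truth (In n L))) (seq 0 (S M))) L).
  { apply NoDup_Permutation.
    - apply NoDup_filter, seq_NoDup.
    - apply FinFun.Injective_map_NoDup; [intros u v; apply sinj|apply seq_NoDup].
    - intro z. rewrite filter_In, Bool.andb_true_iff, in_seq.
      destruct (truthP (In z L)) as [Hz|Hz].
      + specialize (HL z Hz). split; [tauto|]. intros _. repeat split; try lia; tauto.
      + split; [intros (_ & _ & E); discriminate|tauto]. }
  rewrite (prodL_perm _ _ _ Pm). unfold L. now rewrite prodL_map.
Qed.

(* In an abelian group, if every subseries of y converges then so does every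
   injective rearrangement of y: the partial products of y o s differ from those
   of the subseries over the range of s by a far-out subseries, which is small. *)
Lemma rearranged_convergent (y : nat -> G) (s : nat -> nat) :
  (forall T, convergent G (pprod G (sel T y))) ->
  (forall a b, s a = s b -> a = b) ->
  convergent G (pprod G (fun k => y (s k))).
Proof.
  destruct GA as (As & _ & M1r & Vl & Vr). destruct CO as [Cm Ci].
  intros Hsub sinj.
  pose (T0 := fun n => truth (exists k, s k = n)).
  destruct (Hsub T0) as [x Hx]. exists x. intros U HU Ux.
  assert (Ux' : U (gmul G x (ginv G (gone G)))).
  { replace (ginv G (gone G)) with (gone G); [now rewrite M1r|].
    rewrite <- (M1r (ginv G (gone G))). now rewrite Vl. }
  destruct (Cm _ _ _ HU Ux') as (V & W & HV & HW & Vx & We & HVW).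
  destruct (Ci _ W HW We) as (W' & HW' & W'e & HW'W).
  destruct (subseries_uniformly_small y Hsub W' HW' W'e) as [N HN].
  destruct (injective_escapes s sinj N) as [K0 HK0].
  destruct (Hx V HV Vx) as [N1 HN1].
  exists K0. intros K HK.
  pose (L := map s (seq 0 (S K))). pose (M := N1 + list_max L).
  pose (TK := fun n => andb (T0 n) (negb (truth (In n L)))).
  assert (Hext : forall k, k <= K -> T0 (s k) = true /\ s k <= M).
  { intros k Hk. split.
    - unfold T0. destruct (truthP (exists k', s k' = s k)) as [_|C]; [reflexivity|].
      exfalso; eauto.
    - enough (s k <= list_max L) by (unfold M; lia). apply list_max_in.
      apply in_map, in_seq. lia. }
  assert (Key := pprod_extract T0 y s K M sinj Hext). fold L in Key. fold TK in Key.
  replace (pprod G (fun k => y (s k)) K)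
    with (gmul G (pprod G (sel T0 y) M) (ginv G (pprod G (sel TK y) M)))
    by (rewrite Key, <- As, Vr, M1r; reflexivity).
  apply HVW; [apply HN1; unfold M; lia|]. apply HW'W. apply HN.
  (* TK only keeps values s k with k > K, which are beyond N *)
  intros n Hn. unfold TK, T0 in Hn. apply Bool.andb_true_iff in Hn. destruct Hn as [H1 H2].
  destruct (truthP (exists k, s k = n)) as [[k Hk]|]; [subst n|discriminate].
  apply HK0. destruct (le_lt_dec k K) as [h|h]; [|lia]. exfalso.
  destruct (truthP (In (s k) L)) as [_|C]; [discriminate|].
  apply C, in_map, in_seq. lia.
Qed.

(* The range of a hyper-multipliable sequence is absolutely productive: a
   sequence of distinct elements of the range is an injective rearrangement
   of a sequence of powers of the original one. *)
Lemma range_absolutely_productive (g : nat -> G) :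
  hyper_multipliable G g -> absolutely_productive G (fun x => exists n, g n = x).
Proof.
  intros Hm h Hdh Hh m.
  destruct (choice _ Hh) as [s Hs].
  assert (sinj : forall a b, s a = s b -> a = b).
  { intros a b E. apply NNPP; intro C. apply (Hdh a b C). now rewrite <- Hs, E, Hs. }
  destruct (injective_left_inverse s sinj) as [r Hr].
  pose (y := fun n => zpow G (g n) (m (r n))).
  replace (fun k => zpow G (h k) (m k)) with (fun k => y (s k))
    by (apply functional_extensionality; intro k; unfold y; now rewrite Hs, Hr).
  apply rearranged_convergent; [|exact sinj].
  intro T. replace (sel T y) with (fun n => zpow G (g n) (if T n then m (r n) else 0%Z)).
  - apply Hm.
  - apply functional_extensionality. intro n. unfold sel, y. now destruct (T n).
Qed.

End Abelian.
End TopologicalGroup.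

Lemma STAP_HTAP (G : GTData) : hausdorff_topological_group G -> STAP G -> HTAP G.
Proof.
  intros (GA & _ & CO & _) HS g Hd Hm. apply (HS g Hd).
  now apply hyper_multipliable_converging.
Qed.

Lemma HTAP_TAP (G : GTData) : HTAP G -> TAP G.
Proof.
  intros HH A HA. apply NNPP. intro Hinf.
  destruct (infinite_distinct_seq A Hinf) as [g [Hd Hg]].
  exact (HH g Hd (HA g Hd Hg)).
Qed.

Lemma TAP_HTAP_abelian (G : GTData) :
  hausdorff_topological_group G -> abelian G -> TAP G -> HTAP G.
Proof.
  intros (GA & _ & CO & _) Ab HT g Hd Hm.
  destruct (HT _ (range_absolutely_productive G GA CO Ab g Hm)) as [l Hl].
  apply (injective_seq_not_in_list g l Hd). intro n. apply Hl. eauto.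
Qed.

Lemma group_cancel (D : Group) (a b : D) : dmul D a b = a -> b = done D.
Proof.
  intro H. rewrite <- (dmul1l D b), <- (dmulVl D a), <- dassoc, H. reflexivity.
Qed.

(* Restricted products and the Boolean group on nat are examples. *)
#[local] Set Implicit Arguments.
Record discrete_coordinates (G : GTData) (D : nat -> Group) (c : forall i, G -> D i) :
  Prop := {
  coord_mul : forall i x y, c i (gmul G x y) = dmul (D i) (c i x) (c i y);
  coord_one : forall i, c i (gone G) = done (D i);
  coord_inv : forall i x, c i (ginv G x) = dinv (D i) (c i x);
  coord_finite_support : forall x, exists l, forall i, c i x <> done (D i) -> In i l;
  coord_locally_constant : forall x i, gopen G (fun y => c i y = c i x);
  coord_separating : forall x, (forall i, c i x = done (D i)) -> x = gone G;
  coord_basic_nbhd : forall U x, gopen G U -> U x ->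
    exists F, forall y, (forall i, In i F -> c i y = c i x) -> U y
}.
#[local] Unset Implicit Arguments.

Section Coordinates.
Variables (G : GTData) (D : nat -> Group) (c : forall i, G -> D i).
Hypothesis Hc : discrete_coordinates G D c.

Lemma coord_zpow_trivial i g m : c i g = done (D i) -> c i (zpow G g m) = done (D i).
Proof.
  intro Hg.
  assert (Hn : forall k, c i (npow G g k) = done (D i)).
  { induction k as [|k IH]; simpl; [apply (coord_one Hc)|].
    rewrite (coord_mul Hc), Hg, IH. apply dmul1l. }
  destruct m; simpl; [apply (coord_one Hc)|apply Hn|].
  rewrite (coord_inv Hc), Hn. apply dinv1.
Qed.

Lemma coord_pprod_single i (f : nat -> G) t0 :
  (forall t, t <> t0 -> c i (f t) = done (D i)) ->
  forall N, c i (pprod G f N) = if le_dec t0 N then c i (f t0) else done (D i).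
Proof.
  intros Hf N. induction N as [|N IH]; simpl pprod.
  - destruct (le_dec t0 0) as [h|h].
    + now replace t0 with 0 by lia.
    + apply Hf. lia.
  - rewrite (coord_mul Hc), IH.
    destruct (Nat.eq_dec (S N) t0) as [<-|Hne].
    + destruct (le_dec (S N) N); [lia|]. destruct (le_dec (S N) (S N)); [|lia]. apply dmul1l.
    + rewrite (Hf _ Hne), dmul1r.
      destruct (le_dec t0 N), (le_dec t0 (S N)); reflexivity || lia.
Qed.

(* If the series of g converges, each coordinate of g n is eventually trivial,
   since the coordinates of the partial products are eventually constant. *)
Lemma coord_eventually_trivial (g : nat -> G) : convergent G (pprod G g) ->
  forall j, exists N, forall n, N <= n -> c j (g n) = done (D j).
Proof.
  intros [x Hx] j.
  destruct (Hx _ (coord_locally_constant Hc x j) eq_refl) as [N HN].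
  exists (S N). intros [|k] Hk; [lia|].
  assert (E1 := HN k ltac:(lia)). assert (E2 := HN (S k) ltac:(lia)). simpl in E2.
  rewrite (coord_mul Hc), E1 in E2. exact (group_cancel _ _ _ E2).
Qed.

Lemma eventually_trivial_list (g : nat -> G) :
  (forall j, exists N, forall n, N <= n -> c j (g n) = done (D j)) ->
  forall L, exists N, forall n, N <= n -> forall j, In j L -> c j (g n) = done (D j).
Proof.
  intros Hg L. induction L as [|j L [N1 H1]]; [exists 0; intros; contradiction|].
  destruct (Hg j) as [N2 H2]. exists (N1 + N2).
  intros n Hn j' [<-|Hj']; [apply H2|apply H1]; auto; lia.
Qed.

(* Each new
   term is chosen trivial on the supports of the previous ones. *)
Lemma private_coordinates (g : nat -> G) :
  (forall i j, i <> j -> g i <> g j) ->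
  (forall j, exists N, forall n, N <= n -> c j (g n) = done (D j)) ->
  exists nn ii : nat -> nat,
    (forall k, c (ii k) (g (nn k)) <> done (D (ii k))) /\
    (forall l k, l <> k -> c (ii k) (g (nn l)) = done (D (ii k))).
Proof.
  intros Hd Hg.
  destruct (choice _ (coord_finite_support Hc)) as [supp Hsupp].
  pose (fresh := fun (L : list (nat * nat)) (p : nat * nat) =>
     c (snd p) (g (fst p)) <> done (D (snd p)) /\
     forall q, In q L -> forall j, In j (supp (g (fst q))) -> c j (g (fst p)) = done (D j)).
  assert (Hfresh : forall L, exists p, fresh L p).
  { intro L.
    destruct (eventually_trivial_list g Hg (flat_map (fun q => supp (g (fst q))) L))
      as [N HN].
    assert (exists n, N <= n /\ g n <> gone G) as [n [Hn Hgn]].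
    { destruct (classic (g N = gone G)) as [E|E]; [|eauto].
      exists (S N). split; [lia|]. intro E'. apply (Hd N (S N)); [lia|congruence]. }
    assert (exists i, c i (g n) <> done (D i)) as [i Hi].
    { apply NNPP. intro C. apply Hgn, (coord_separating Hc). intro i.
      apply NNPP. intro C'. apply C. eauto. }
    exists (n, i). split; [exact Hi|]. intros q Hq j Hj. apply HN; [exact Hn|].
    apply in_flat_map. eauto. }
  destruct (choose_sequence fresh Hfresh) as [p Hp].
  exists (fun k => fst (p k)), (fun k => snd (p k)). split; [intro k; apply (Hp k)|].
  assert (Hlt : forall l k, l < k -> forall j, c j (g (fst (p l))) <> done (D j) ->
     c j (g (fst (p k))) = done (D j)).
  { intros l k Hlk j Hj. apply (proj2 (Hp k) (p l)); [apply in_map, in_seq; lia|].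
    apply Hsupp, Hj. }
  intros l k Hlk. destruct (Nat.lt_total l k) as [h|[h|h]]; [|contradiction|].
  - apply NNPP; intro C. apply (proj1 (Hp k)). exact (Hlt l k h _ C).
  - apply (Hlt k l h). apply (Hp k).
Qed.

(* A group with discrete coordinates is HTAP: multiplying exactly the extracted
   terms g (nn k) gives a convergent product whose limit is nontrivial on all
   the (distinct) private coordinates ii k, contradicting finite support. *)
Lemma coord_HTAP : HTAP G.
Proof.
  intros g Hd Hm.
  assert (Hg : forall j, exists N, forall n, N <= n -> c j (g n) = done (D j)).
  { intro j. destruct (coord_eventually_trivial _ (Hm (fun _ => 1%Z)) j) as [N HN].
    exists N. intros n Hn. specialize (HN n Hn). simpl in HN.
    now rewrite (coord_mul Hc), (coord_one Hc), dmul1r in HN. }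
  destruct (private_coordinates g Hd Hg) as (nn & ii & Hown & Hother).
  pose (m := fun t => if truth (exists k, nn k = t) then 1%Z else 0%Z).
  destruct (Hm m) as [x Hx].
  assert (Hx_ii : forall k, c (ii k) x = c (ii k) (g (nn k))).
  { intro k. destruct (Hx _ (coord_locally_constant Hc x (ii k)) eq_refl) as [N HN].
    rewrite <- (HN (N + nn k)) by lia.
    rewrite (coord_pprod_single (ii k) _ (nn k)).
    - destruct (le_dec (nn k) (N + nn k)); [|lia]. unfold m.
      destruct (truthP (exists k', nn k' = nn k)) as [_|C]; [|exfalso; eauto].
      simpl. rewrite (coord_mul Hc), (coord_one Hc). apply dmul1r.
    - intros t Ht. unfold m. destruct (truthP (exists k', nn k' = t)) as [[l <-]|_].
      + apply coord_zpow_trivial, Hother. intros ->. now apply Ht.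
      + apply (coord_one Hc). }
  destruct (coord_finite_support Hc x) as [l Hl].
  apply (injective_seq_not_in_list ii l).
  - intros k k' Hkk' E. apply (Hown k'). rewrite <- E. apply Hother. intros ->. now apply Hkk'.
  - intro k. apply Hl. rewrite Hx_ii. apply Hown.
Qed.

(* If each u n is nontrivial exactly in the coordinate n, the u n are distinct
   and every sequence of powers of them tends to e (it eventually lies in every
   basic neighbourhood), so G is not STAP. *)
Lemma coord_not_STAP (u : nat -> G) :
  (forall n i, i <> n -> c i (u n) = done (D i)) ->
  (forall n, c n (u n) <> done (D n)) -> ~ STAP G.
Proof.
  intros Hu_off Hu_on HS. apply (HS u).
  - intros a b Hab E. apply (Hu_on a). rewrite E. apply Hu_off. auto.
  - intros m U HU Ue. destruct (coord_basic_nbhd Hc U (gone G) HU Ue) as [F HF].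
    exists (S (list_max F)). intros n Hn. apply HF. intros i Hi.
    rewrite (coord_one Hc). apply coord_zpow_trivial, Hu_off.
    apply list_max_in in Hi. lia.
Qed.
End Coordinates.

Lemma restricted_product_coordinates (D : nat -> Group) :
  discrete_coordinates (restricted_product D) D (fun i x => proj1_sig x i).
Proof.
  split; try reflexivity.
  - intro x. exact (proj2_sig x).
  - intros x i z Hz. exists (i :: nil). intros y Hy. rewrite Hy by now left. exact Hz.
  - intros [f pf] H. simpl in H.
    assert (E : f = fun i => done (D i)) by (apply functional_extensionality_dep; exact H).
    subst f. unfold gone; simpl. f_equal. apply proof_irrelevance.
  - intros U x HU Ux. exact (HU x Ux).
Qed.

Lemma restricted_product_HTAP_not_STAP (D : nat -> Group) : (forall i, nontrivial (D i)) ->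
  HTAP (restricted_product D) /\ ~ STAP (restricted_product D).
Proof.
  intro HD. split; [exact (coord_HTAP _ _ _ (restricted_product_coordinates D))|].
  assert (Hpick : forall i, {x : D i | x <> done (D i)})
    by (intro i; apply constructive_indefinite_description, HD).
  pose (a := fun i => proj1_sig (Hpick i)).
  pose (single := fun n i => match Nat.eq_dec n i with
                             | left E => eq_rect n (fun j => dcar (D j)) (a n) i E
                             | right _ => done (D i) end).
  assert (Hsingle : forall n, fin_supp D (single n)).
  { intro n. exists (n :: nil). intros i Hi. unfold single in Hi.
    destruct (Nat.eq_dec n i); [now left|contradiction]. }
  apply (coord_not_STAP _ _ _ (restricted_product_coordinates D)
           (fun n => exist _ (single n) (Hsingle n) : restricted_product D)).
  - intros n i Hin. simpl. unfold single. destruct (Nat.eq_dec n i); [congruence|reflexivity].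
  - intro n. simpl. unfold single. destruct (Nat.eq_dec n n) as [E|E]; [|contradiction].
    rewrite (proof_irrelevance _ E eq_refl). exact (proj2_sig (Hpick n)).
Qed.

Definition boolGroup : Group.
Proof.
  refine {| dcar := bool; dmul := xorb; dinv := fun b => b; done := false |};
  intros; repeat match goal with b : bool |- _ => destruct b end; reflexivity.
Defined.

(* The countable Boolean group (Z/2)^(N), realised on nat: the bits of a number
   are its coordinates, the group law is bitwise xor, and the topology is that of
   pointwise convergence of bits. *)
Definition agree (k x y : nat) : Prop := forall i, i < k -> Nat.testbit y i = Nat.testbit x i.

Definition bits_open (U : nat -> Prop) : Prop :=
  forall x, U x -> exists k, forall y, agree k x y -> U y.

Definition bit_group : GTData :=
  {| gcar := nat; gmul := Nat.lxor; ginv := fun x => x; gone := 0; gopen := bits_open |}.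

Lemma agree_open k x : bits_open (agree k x).
Proof. intros z Hz. exists k. intros y Hy i Hi. rewrite Hy by exact Hi. now apply Hz. Qed.

Lemma bit_group_coordinates :
  discrete_coordinates bit_group (fun _ => boolGroup) (fun i x => Nat.testbit x i).
Proof.
  split; simpl.
  - intros. apply Nat.lxor_spec.
  - intros. apply Nat.bits_0.
  - reflexivity.
  - intro x. exists (seq 0 (S (Nat.log2 x))). intros i Hi. apply in_seq.
    destruct (le_lt_dec i (Nat.log2 x)); [lia|]. exfalso. apply Hi, Nat.bits_above_log2. lia.
  - intros x i z Hz. exists (S i). intros y Hy. rewrite Hy by lia. exact Hz.
  - intros x H. apply Nat.bits_inj_0. exact H.
  - intros U x HU Ux. destruct (HU x Ux) as [k Hk]. exists (seq 0 k). intros y Hy.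
    apply Hk. intros i Hi. apply Hy, in_seq. lia.
Qed.

Lemma bit_group_htg : hausdorff_topological_group bit_group.
Proof.
  split; [|split; [|split]].
  - repeat split; simpl; intros.
    + symmetry; apply Nat.lxor_assoc.
    + apply Nat.lxor_0_l.
    + apply Nat.lxor_0_r.
    + apply Nat.lxor_nilpotent.
    + apply Nat.lxor_nilpotent.
  - split; [|split]; simpl.
    + intros x _. exists 0. auto.
    + intros I F HF x [i Fi]. destruct (HF i x Fi) as [k Hk]. exists k. intros y Hy. exists i. auto.
    + intros U V HU HV x [Ux Vx]. destruct (HU x Ux) as [k1 H1]. destruct (HV x Vx) as [k2 H2].
      exists (k1 + k2). intros y Hy. split; [apply H1|apply H2]; intros i Hi; apply Hy; lia.
  - split; simpl.
    + intros x y U HU Uxy. destruct (HU _ Uxy) as [k Hk].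
      exists (agree k x), (agree k y). repeat split; try apply agree_open; try easy.
      intros a b Ha Hb. apply Hk. intros i Hi. now rewrite !Nat.lxor_spec, Ha, Hb.
    + intros x U HU Ux. exists U. auto.
  - intros x y Hxy. simpl.
    assert (exists k, Nat.testbit x k <> Nat.testbit y k) as [k Hk].
    { apply NNPP. intro C. apply Hxy, Nat.bits_inj. intro n.
      destruct (Bool.bool_dec (Nat.testbit x n) (Nat.testbit y n)); [assumption|].
      exfalso; eauto. }
    exists (agree (S k) x), (agree (S k) y). repeat split; try apply agree_open; try easy.
    intros z Hx Hy. apply Hk. rewrite <- (Hx k), <- (Hy k); auto.
Qed.

(* Precompactness: the residues mod 2^k are finitely many translates covering
   the neighbourhood of 0 determined by the first k bits. *)
Lemma bit_group_precompact : precompact bit_group.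
Proof.
  intros U HU U0. simpl in *. destruct (HU 0 U0) as [k Hk].
  exists (seq 0 (2 ^ k)). intro x. exists (x mod 2 ^ k). split.
  - apply in_seq. split; [lia|]. simpl. apply Nat.mod_upper_bound, Nat.pow_nonzero. lia.
  - apply Hk. intros i Hi. rewrite Nat.lxor_spec, Nat.mod_pow2_bits_low, Nat.bits_0 by exact Hi.
    now destruct (Nat.testbit x i).
Qed.

(* The powers of two are supported on single bits, so bit_group is not STAP. *)
Lemma bit_group_not_STAP : ~ STAP bit_group.
Proof.
  apply (coord_not_STAP _ _ _ bit_group_coordinates (fun n => 2 ^ n)).
  - intros n i H. simpl. rewrite Nat.pow2_bits_eqb. now apply Nat.eqb_neq.
  - intro n. simpl. rewrite Nat.pow2_bits_eqb, Nat.eqb_refl. discriminate.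
Qed.

Definition first_diff (x y : nat) : nat :=
  epsilon (inhabits 0) (fun n => Nat.testbit x n <> Nat.testbit y n /\ agree n x y).

Lemma first_diff_spec x y : x <> y ->
  Nat.testbit x (first_diff x y) <> Nat.testbit y (first_diff x y) /\ agree (first_diff x y) x y.
Proof.
  intro Hxy.
  apply (epsilon_spec (inhabits 0) (fun n => Nat.testbit x n <> Nat.testbit y n /\ agree n x y)).
  assert (Hex : exists n, Nat.testbit x n <> Nat.testbit y n).
  { apply NNPP. intro C. apply Hxy, Nat.bits_inj. intro n.
    destruct (Bool.bool_dec (Nat.testbit x n) (Nat.testbit y n)); [assumption|].
    exfalso; eauto. }
  destruct (dec_inh_nat_subset_has_unique_least_element _ (fun n => classic _) Hex)
    as [n [[Hn Hmin] _]].
  exists n. split; [exact Hn|]. intros i Hi.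
  destruct (Bool.bool_dec (Nat.testbit y i) (Nat.testbit x i)) as [E|E]; [exact E|].
  specialize (Hmin i (fun E' => E (eq_sym E'))). lia.
Qed.

Lemma agree_first_diff x y k : x <> y -> agree k x y <-> k <= first_diff x y.
Proof.
  intro Hxy. destruct (first_diff_spec x y Hxy) as [Hdiff Hagree]. split.
  - intro Hk. destruct (le_lt_dec k (first_diff x y)) as [h|h]; [exact h|].
    exfalso. apply Hdiff. symmetry. now apply Hk.
  - intros Hk i Hi. apply Hagree. lia.
Qed.

Lemma first_diff_sym x y : x <> y -> first_diff x y = first_diff y x.
Proof.
  intro Hxy.
  assert (Hyx : y <> x) by congruence.
  apply Nat.le_antisymm; apply agree_first_diff; try assumption; intros i Hi; symmetry.
  - exact (proj2 (first_diff_spec x y Hxy) i Hi).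
  - exact (proj2 (first_diff_spec y x Hyx) i Hi).
Qed.

(* Agreement is transitive, so first differences satisfy the ultrametric law. *)
Lemma first_diff_min x y z : x <> y -> y <> z -> x <> z ->
  Nat.min (first_diff x y) (first_diff y z) <= first_diff x z.
Proof.
  intros Hxy Hyz Hxz. apply agree_first_diff; [exact Hxz|]. intros i Hi.
  rewrite (proj2 (first_diff_spec y z Hyz) i) by lia.
  apply (proj2 (first_diff_spec x y Hxy)). lia.
Qed.

Definition bit_dist (x y : nat) : R :=
  if Nat.eq_dec x y then 0%R else (/ INR (S (first_diff x y)))%R.

Lemma inv_S_pos k : (0 < / INR (S k))%R.
Proof. apply Rinv_0_lt_compat, lt_0_INR. lia. Qed.

Lemma inv_S_le a b : a <= b -> (/ INR (S b) <= / INR (S a))%R.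
Proof. intro H. apply Rinv_le_contravar; [apply lt_0_INR; lia|apply le_INR; lia]. Qed.

Lemma bit_dist_refl x : bit_dist x x = 0%R.
Proof. unfold bit_dist. now destruct (Nat.eq_dec x x). Qed.

Lemma bit_dist_neq x y : x <> y -> bit_dist x y = (/ INR (S (first_diff x y)))%R.
Proof. unfold bit_dist. now destruct (Nat.eq_dec x y). Qed.

Lemma bit_dist_nonneg x y : (0 <= bit_dist x y)%R.
Proof.
  destruct (Nat.eq_dec x y) as [<-|Nxy]; [rewrite bit_dist_refl; lra|].
  rewrite bit_dist_neq by exact Nxy. left. apply inv_S_pos.
Qed.

Lemma bit_dist_ultrametric x y z : (bit_dist x z <= Rmax (bit_dist x y) (bit_dist y z))%R.
Proof.
  destruct (Nat.eq_dec x z) as [<-|Nxz].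
  { rewrite bit_dist_refl. eapply Rle_trans; [apply bit_dist_nonneg|apply Rmax_l]. }
  destruct (Nat.eq_dec x y) as [<-|Nxy]; [apply Rmax_r|].
  destruct (Nat.eq_dec y z) as [<-|Nyz]; [apply Rmax_l|].
  rewrite !bit_dist_neq by assumption.
  pose proof (first_diff_min x y z Nxy Nyz Nxz) as Hmin.
  destruct (Nat.le_ge_cases (first_diff x y) (first_diff y z)) as [h|h].
  - rewrite Nat.min_l in Hmin by exact h. eapply Rle_trans; [apply inv_S_le, Hmin|apply Rmax_l].
  - rewrite Nat.min_r in Hmin by exact h. eapply Rle_trans; [apply inv_S_le, Hmin|apply Rmax_r].
Qed.

(* The metric balls of radius 1/(k+1) are the sets of y agreeing with x on
   more than k bits, so the metric induces the topology of bit_group. *)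
Lemma bit_dist_small x y k : (bit_dist x y < / INR (S k))%R -> agree k x y.
Proof.
  destruct (Nat.eq_dec x y) as [<-|Nxy]; [intros _ i _; reflexivity|].
  rewrite bit_dist_neq by exact Nxy. intro H. apply agree_first_diff; [exact Nxy|].
  destruct (le_lt_dec k (first_diff x y)) as [h|h]; [exact h|].
  pose proof (inv_S_le (first_diff x y) k ltac:(lia)). lra.
Qed.

Lemma agree_bit_dist x y k : agree k x y -> (bit_dist x y <= / INR (S k))%R.
Proof.
  destruct (Nat.eq_dec x y) as [<-|Nxy]; [rewrite bit_dist_refl; left; apply inv_S_pos|].
  rewrite bit_dist_neq by exact Nxy. intro H. apply inv_S_le, agree_first_diff; assumption.
Qed.

Lemma bit_group_metrizable : metrizable bit_group.
Proof.
  exists bit_dist. repeat split.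
  - apply bit_dist_nonneg.
  - intro H. destruct (Nat.eq_dec x y) as [E|Nxy]; [exact E|].
    rewrite bit_dist_neq in H by exact Nxy. pose proof (inv_S_pos (first_diff x y)). lra.
  - intros ->. apply bit_dist_refl.
  - intros x y. destruct (Nat.eq_dec x y) as [->|Nxy]; [reflexivity|].
    rewrite !bit_dist_neq by congruence. now rewrite first_diff_sym.
  - intros x y z. apply Rle_trans with (1 := bit_dist_ultrametric x y z).
    pose proof (bit_dist_nonneg x y). pose proof (bit_dist_nonneg y z).
    unfold Rmax. destruct (Rle_dec _ _); lra.
  - intros HU x Ux. destruct (HU x Ux) as [k Hk]. exists (/ INR (S k))%R.
    split; [apply inv_S_pos|]. intros y Hy. apply Hk, bit_dist_small, Hy.
  - intros HU x Ux. destruct (HU x Ux) as [eps [Heps Hball]].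
    destruct (archimed_cor1 eps Heps) as [N [HN HN0]].
    exists N. intros y Hy. apply Hball. eapply Rle_lt_trans; [apply agree_bit_dist, Hy|].
    eapply Rle_lt_trans; [|exact HN]. apply Rinv_le_contravar; [apply lt_0_INR; lia|].
    apply le_INR. lia.
Qed.

Theorem lemma4p4 :
  (* (a) *)
  (forall G : GTData, hausdorff_topological_group G ->
     (STAP G -> HTAP G) /\ (HTAP G -> TAP G)) /\
  (* (a-bis) *)
  (forall G : GTData, hausdorff_topological_group G -> abelian G ->
     (HTAP G <-> TAP G)) /\
  (* (b) *)
  (forall D : nat -> Group, (forall i, nontrivial (D i)) ->
     HTAP (restricted_product D) /\ ~ STAP (restricted_product D)) /\
  (* in particular *)
  (exists G : GTData, hausdorff_topological_group G /\ abelian G /\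
     countable G /\ metrizable G /\ precompact G /\ TAP G /\ ~ STAP G).
Proof.
  split; [|split; [|split]].
  - intros G HG. split; [now apply STAP_HTAP|apply HTAP_TAP].
  - intros G HG Ab. split; [apply HTAP_TAP|now apply TAP_HTAP_abelian].
  - exact restricted_product_HTAP_not_STAP.
  - exists bit_group.
    split; [exact bit_group_htg|]. split; [intros x y; apply Nat.lxor_comm|].
    split; [exists (fun x => x); auto|]. split; [exact bit_group_metrizable|].
    split; [exact bit_group_precompact|]. split; [|exact bit_group_not_STAP].
    apply HTAP_TAP, (coord_HTAP _ _ _ bit_group_coordinates).
Qed.
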